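(* Let $c$ be a twisted cap-cup cycle with $T(c) = \pm 2$. Then there exists an unknot diagram $g \in \mathbb{CC}$ such that $W(g) = W(c)$ and $\mathrm{ccc}(g) = U(c)$.
   Context: $\mathbb{CC}$ is the free (strict) braided monoidal category generated by objects $\uparrow, \downarrow$ and four generating morphisms, with no equations imposed between them: caps $\mathrm{cap}_r : I \to \uparrow \otimes \downarrow$, $\mathrm{cap}_l : I \to \downarrow \otimes \uparrow$ and cups $\mathrm{cup}_r : \downarrow \otimes \uparrow \to I$, $\mathrm{cup}_l : \uparrow \otimes \downarrow \to I$. Wires are oriented according to their labels. A knot (diagram) in $\mathbb{CC}$ is a morphism $I \to I$ whose string diagram has a single connected component; it is an unknot diagram if the knot it depicts (interpreting caps and cups as arcs) is isotopic to the unknot in the usual (general) sense. The writhe $W(g)$ of a diagram is the sum of the signs of its crossings (the braiding $\sigma$ between equally oriented strands counts $+1$, $\sigma^{-1}$ counts $-1$, i.e.\ the standard sign of oriented crossings). The turning numbers of the generators are $t(\mathrm{cap}_r) = +1$, $t(\mathrm{cap}_l) = -1$, $t(\mathrm{cup}_r) = -1$, $t(\mathrm{cup}_l) = +1$. A cap-cup cycle is a finite sequence of elements of $\{\mathrm{cap}_l, \mathrm{cap}_r, \mathrm{cup}_l, \mathrm{cup}_r\}$ up to cyclic permutation in which caps and cups alternate. For a knot $g$, $\mathrm{ccc}(g)$ is the cap-cup cycle recorded by following the strand along its orientation once around. A twisted cap-cup is an element $(x, w)$ of $\{\mathrm{cap}_l, \mathrm{cap}_r, \mathrm{cup}_l,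 \mathrm{cup}_r\} \times \mathbb{Z}$ (thought of as the cap/cup $x$ composed with braidings of total writhe $w$); its turning number is $T((x,w)) = (-1)^{|w|} t(x)$ and its writhe is $W((x,w)) = w$. A twisted cap-cup cycle is a finite sequence of twisted cap-cups up to cyclic permutation in which caps and cups alternate; its turning number $T(c)$ and writhe $W(c)$ are the sums of those of its elements, and $U(c)$ is the cap-cup cycle obtained by forgetting the integer component of each element. *)

From mathcomp Require Import all_boot all_algebra.
From Stdlib Require Import Relations.
Set Implicit Arguments. Unset Strict Implicit. Unset Printing Implicit Defensive.
Import GRing.Theory.
Local Open Scope ring_scope.

Inductive cc := cap_l | cap_r | cup_l | cup_r.

Definition is_cap (x : cc) : bool :=
  match x with cap_l | cap_r => true | _ => false end.

Definition turning (x : cc) : int :=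
  match x with cap_r => 1 | cap_l => -1 | cup_r => -1 | cup_l => 1 end.

(* String diagrams of the free strict braided monoidal category CC.         *)
(* Objects: words in {up, down}; true = up (↑), false = down (↓).           *)
(* A morphism is represented by a layered word: each layer is (k, g) =      *)
(* id_(k wires) ⊗ g ⊗ id_(remaining wires), composed bottom (source) to top. *)
(* G_braid x y true  = σ_{x,y}        : x⊗y -> y⊗x                          *)
(* G_braid x y false = σ^{-1}_{y,x}   : x⊗y -> y⊗x                          *)
Definition obj := seq bool.

Inductive gen := G_cc of cc | G_braid of bool & bool & bool.

Definition gsrc (g : gen) : obj :=
  match g with
  | G_cc cap_l | G_cc cap_r => [::]
  | G_cc cup_r => [:: false; true]
  | G_cc cup_l => [:: true; false]
  | G_braid x y _ => [:: x; y]
  end.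

Definition gtgt (g : gen) : obj :=
  match g with
  | G_cc cap_r => [:: true; false]
  | G_cc cap_l => [:: false; true]
  | G_cc cup_r | G_cc cup_l => [::]
  | G_braid x y _ => [:: y; x]
  end.

Definition layer := (nat * gen)%type.
Definition diagram := seq layer.

Definition apply_layer (o : obj) (l : layer) : option obj :=
  let: (k, g) := l in
  if ((k + size (gsrc g) <= size o)%N && (take (size (gsrc g)) (drop k o) == gsrc g))
  then Some (take k o ++ gtgt g ++ drop (k + size (gsrc g)) o)
  else None.

Fixpoint run (o : obj) (d : diagram) : option obj :=
  match d with
  | [::] => Some o
  | l :: d' => if apply_layer o l is Some o' then run o' d' else None
  end.

Definition typed (d : diagram) : bool := run [::] d == Some [::].

Fixpoint levels (o : obj) (d : diagram) : seq obj :=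
  o :: match d with
       | [::] => [::]
       | l :: d' => levels (odflt [::] (apply_layer o l)) d'
       end.

Definition lev (d : diagram) (t : nat) : obj := nth [::] (levels [::] d) t.

(* points of the string diagram: (level t, wire position p) *)
Definition points (d : diagram) : seq (nat * nat) :=
  flatten [seq [seq (t, p) | p <- iota 0 (size (lev d t))] | t <- iota 0 (size d).+1].

(* one step along the strand, following its orientation; records the
   cap/cup passed through, if any *)
Definition step (d : diagram) (s : nat * nat) : (nat * nat) * option cc :=
  let: (t, p) := s in
  if nth false (lev d t) p then
    (* moving up through layer t *)
    let: (k, g) := nth (0%N, G_cc cap_l) d t in
    if (p < k)%N then ((t.+1, p), None)
    else if (k + size (gsrc g) <= p)%N then ((t.+1, p - size (gsrc g) + size (gtgt g))%N, None)
    else match g with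
         | G_braid _ _ _ => ((t.+1, k + (1 - (p - k)))%N, None)
         | G_cc x => ((t, k + (1 - (p - k)))%N, Some x)  (* a cup *)
         end
  else
    (* moving down through layer t-1 *)
    let: (k, g) := nth (0%N, G_cc cap_l) d t.-1 in
    if (p < k)%N then ((t.-1, p), None)
    else if (k + size (gtgt g) <= p)%N then ((t.-1, p - size (gtgt g) + size (gsrc g))%N, None)
    else match g with
         | G_braid _ _ _ => ((t.-1, k + (1 - (p - k)))%N, None)
         | G_cc x => ((t, k + (1 - (p - k)))%N, Some x)  (* a cap *)
         end.

Fixpoint orbit (d : diagram) (s : nat * nat) (n : nat) : seq (nat * nat) :=
  if n is n'.+1 then s :: orbit d (step d s).1 n' else [::].

Fixpoint turns (d : diagram) (s : nat * nat) (n : nat) : seq cc :=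
  if n is n'.+1 then
    let: (s', o) := step d s in
    (if o is Some x then [:: x] else [::]) ++ turns d s' n'
  else [::].

Definition start (d : diagram) : nat * nat := head (0%N, 0%N) (points d).

(* a knot: a morphism I -> I whose string diagram is a single closed strand *)
Definition is_knot (d : diagram) : bool :=
  [&& typed d, (0 < size (points d))%N,
      uniq (orbit d (start d) (size (points d))) &
      all (fun s => s \in points d) (orbit d (start d) (size (points d)))].

(* ccc(g): the cap-cup cycle read once around the strand (a representative
   of the cycle; cycles are compared up to rotation with cyc_eq) *)
Definition ccc (d : diagram) : seq cc := turns d (start d) (size (points d)).

(* sign of an oriented crossing (standard convention, σ_{↑,↑} = +1) *)
Definition crossing_sign (g : gen) : int :=
  match g with
  | G_braid x y s => (if s then 1 else -1) * (if x == y then 1 else -1)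
  | G_cc _ => 0
  end.

Definition writhe (d : diagram) : int := \sum_(l <- d) crossing_sign l.2.

(* Isotopy of diagrams: equivalence generated by local moves, namely the     *)
(* axioms of strict braided monoidal categories (interchange, σσ^{-1}=id,    *)
(* naturality of σ incl. hexagon decomposition, which yields R2/R3 and       *)
(* sliding of caps/cups), the zigzag (planar isotopy) moves and R1 moves.    *)
Definition pass_left (s : bool) (k : nat) (X : obj) (c : bool) : diagram :=
  [seq ((k + i)%N, G_braid (nth false X i) c s) | i <- rev (iota 0 (size X))].

Definition pass_right (s : bool) (k : nat) (c : bool) (X : obj) : diagram :=
  [seq ((k + i)%N, G_braid c (nth false X i) s) | i <- iota 0 (size X)].

Inductive local_move : diagram -> diagram -> Prop :=
| lm_interchange k1 g1 k2 g2 : (k1 + size (gtgt g1) <= k2)%N ->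
    local_move [:: (k1, g1); (k2, g2)]
               [:: ((k2 - size (gtgt g1) + size (gsrc g1))%N, g2); (k1, g1)]
| lm_R2 k x y s :
    local_move [:: (k, G_braid x y s); (k, G_braid y x (~~ s))] [::]
| lm_nat_left k g s c :
    local_move ((k, g) :: pass_left s k (gtgt g) c)
               (rcons (pass_left s k (gsrc g) c) (k.+1, g))
| lm_nat_right k g s c :
    local_move ((k.+1, g) :: pass_right s k c (gtgt g))
               (rcons (pass_right s k c (gsrc g)) (k, g))
| lm_zig1 k : local_move [:: (k.+1, G_cc cap_r); (k, G_cc cup_r)] [::]
| lm_zig2 k : local_move [:: (k.+1, G_cc cap_l); (k, G_cc cup_l)] [::]
| lm_zig3 k : local_move [:: (k, G_cc cap_r); (k.+1, G_cc cup_r)] [::]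
| lm_zig4 k : local_move [:: (k, G_cc cap_l); (k.+1, G_cc cup_l)] [::]
| lm_R1cap_r k s : local_move [:: (k, G_cc cap_r); (k, G_braid true false s)] [:: (k, G_cc cap_l)]
| lm_R1cap_l k s : local_move [:: (k, G_cc cap_l); (k, G_braid false true s)] [:: (k, G_cc cap_r)]
| lm_R1cup_r k s : local_move [:: (k, G_braid true false s); (k, G_cc cup_r)] [:: (k, G_cc cup_l)]
| lm_R1cup_l k s : local_move [:: (k, G_braid false true s); (k, G_cc cup_l)] [:: (k, G_cc cup_r)].

Definition iso_step (d d' : diagram) : Prop :=
  typed d /\ typed d' /\
  exists pre post lhs rhs, local_move lhs rhs /\
    d = pre ++ lhs ++ post /\ d' = pre ++ rhs ++ post.

Definition isotopic : relation diagram := clos_refl_sym_trans diagram iso_step.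

Definition round_unknot : diagram := [:: (0%N, G_cc cap_r); (0%N, G_cc cup_l)].

Definition unknot_diagram (d : diagram) : Prop :=
  is_knot d /\ isotopic d round_unknot.

Definition cyc_eq (T : Type) (s t : seq T) : Prop := exists n, rot n s = t.

Definition alternating (s : seq cc) : bool :=
  all (fun i => is_cap (nth cap_l s i) != is_cap (nth cap_l s (i.+1 %% size s)))
      (iota 0 (size s)).

Definition tcc := (cc * int)%type.

Definition is_tcc_cycle (c : seq tcc) : bool := alternating (map fst c).

Definition tT (e : tcc) : int := (-1) ^+ `|e.2|%N * turning e.1.
Definition Tc (c : seq tcc) : int := \sum_(e <- c) tT e.
Definition Wc (c : seq tcc) : int := \sum_(e <- c) e.2.
Definition Uc (c : seq tcc) : seq cc := map fst c.

(* Rotate the cycle so that it reads a cap [a] followed by a word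
   [y1 z1 ... yn zn y] of alternating cups and caps ending with a cup.  This is
   realised by the cap [a], then [m] crossings of its two strands, then for each
   pair [yi zi] a cup followed by a cap on the upward strand (with one crossing
   when they turn in opposite directions), and finally the cup [y].  Zigzag,
   Reidemeister I and II moves and slides of caps along crossings remove all of
   it, so the diagram is an unknot, and the [m] crossings shift its writhe by
   [+-m], so the writhe can be made [W(c)] -- provided the parity of [m] turns
   the two strands into the orientation that the final cup [y] can close.  Since
   [T(c) = t(U(c)) + 2 W(c) mod 4], that parity condition is [T(c) = 2 mod 4]. *)

From HB Require Import structures.
From Pilot Require Import Defs.
From mathcomp Require Import all_boot all_algebra zify.
From Stdlib Require Import Relations.
Set Implicit Arguments. Unset Strict Implicit. Unset Printing Implicit Defensive.

Definition cc2n (x : cc) : nat :=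
  match x with cap_l => 0 | cap_r => 1 | cup_l => 2 | cup_r => 3 end.
Definition n2cc (n : nat) : cc :=
  match n with 0 => cap_l | 1 => cap_r | 2 => cup_l | _ => cup_r end.
Lemma cc2nK : cancel cc2n n2cc. Proof. by case. Qed.
HB.instance Definition _ := Equality.copy cc (can_type cc2nK).

Lemma run_cat o A B : run o (A ++ B) = obind (run^~ B) (run o A).
Proof. by elim: A o => [|l A IH] o //=; case: (apply_layer o l). Qed.

Lemma nth_levels_catl o P R t : t <= size P ->
  nth [::] (levels o (P ++ R)) t = nth [::] (levels o P) t.
Proof.
elim: P o t => [|l P IH] o t /=; first by rewrite leqn0 => /eqP ->; case: R.
by case: t => // t Ht; rewrite /= IH.
Qed.

Lemma nth_levels_catr o o' P R j : run o P = Some o' ->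
  nth [::] (levels o (P ++ R)) (size P + j) = nth [::] (levels o' R) j.
Proof.
elim: P o => [|l P IH] o /=; first by case=> ->.
by case: (apply_layer o l) => [o1|] // /IH.
Qed.

(** * Following a strand through a diagram *)

(* [step] for a diagram whose bottom object is [o] instead of the unit *)
Definition step_from (o : obj) (d : diagram) (s : nat * nat) : (nat * nat) * option cc :=
  let: (t, p) := s in
  if nth false (nth [::] (levels o d) t) p then
    let: (k, g) := nth (0, G_cc cap_l) d t in
    if p < k then ((t.+1, p), None)
    else if k + size (gsrc g) <= p then ((t.+1, p - size (gsrc g) + size (gtgt g)), None)
    else match g with
         | G_braid _ _ _ => ((t.+1, k + (1 - (p - k))), None)
         | G_cc x => ((t, k + (1 - (p - k))), Some x)
         end
  else
    let: (k, g) := nth (0, G_cc cap_l) d t.-1 in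
    if p < k then ((t.-1, p), None)
    else if k + size (gtgt g) <= p then ((t.-1, p - size (gtgt g) + size (gsrc g)), None)
    else match g with
         | G_braid _ _ _ => ((t.-1, k + (1 - (p - k))), None)
         | G_cc x => ((t, k + (1 - (p - k))), Some x)
         end.

Definition shift (h : nat) (x : nat * nat) : nat * nat := (h + x.1, x.2).

Lemma shift0 h p : shift h (0, p) = (h, p).
Proof. by rewrite /shift addn0. Qed.

Lemma step_from_catr o o' P R j p : run o P = Some o' ->
  (~~ nth false (nth [::] (levels o' R) j) p -> 0 < j) ->
  step_from o (P ++ R) (size P + j, p) =
  let: (y, r) := step_from o' R (j, p) in (shift (size P) y, r).
Proof.
move=> HP Hdown; rewrite /step_from (nth_levels_catr _ _ HP).
case: ifP => up; last first.
  have := Hdown (negbT up); case: j {Hdown} up => // j _ _; rewrite addnS /=.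
all: rewrite nth_cat ltnNge leq_addr /= addKn; case: (nth _ R _) => k g.
all: do 2 (case: ifP => _; first by rewrite /shift /= ?addnS).
all: by case: g => *; rewrite /shift /= ?addnS.
Qed.

(* the step from [x] crosses a layer of [d]: an upward wire below the top level
   or a downward wire above the bottom level *)
Definition step_inside (o : obj) (d : diagram) (x : nat * nat) : bool :=
  (x.1 <= size d) &&
  (if nth false (nth [::] (levels o d) x.1) x.2 then x.1 < size d else 0 < x.1).

Lemma step_from_catl o B Q x : step_inside o B x -> step_from o (B ++ Q) x = step_from o B x.
Proof.
case: x => j p; rewrite /step_inside /= => /andP [Hj].
rewrite /step_from (nth_levels_catl _ _ Hj).
case: ifP => _ H; first by rewrite nth_cat H.
by rewrite nth_cat; case: j H Hj => //= j _ ->.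
Qed.

Fixpoint follows (f : nat * nat -> (nat * nat) * option cc) (x : nat * nat)
    (L : seq (nat * nat)) (R : seq (option cc)) : Prop :=
  match L, R with
  | [::], [::] => True
  | y :: L', r :: R' => f x = (y, r) /\ follows f y L' R'
  | _, _ => False
  end.

Lemma follows_cat f x L1 R1 L2 R2 : follows f x L1 R1 -> follows f (last x L1) L2 R2 ->
  follows f x (L1 ++ L2) (R1 ++ R2).
Proof.
elim: L1 x R1 => [|y L1 IH] x [|r R1] //= [Hx H1] H2.
by split; [|exact: IH].
Qed.

Lemma follows_split f x L1 L2 R : follows f x (L1 ++ L2) R ->
  follows f x L1 (take (size L1) R) /\ follows f (last x L1) L2 (drop (size L1) R).
Proof.
elim: L1 x R => [|y L1 IH] x R /=; first by rewrite take0 drop0.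
by case: R => [|r R] //= [Hx /IH [H1 H2]].
Qed.

Lemma follows_rot f x L R y : follows f x L R -> last x L = x -> y \in L ->
  exists L' R',
    [/\ follows f y L' R', last y L' = y, perm_eq L' L & cyc_eq (pmap id R') (pmap id R)].
Proof.
move=> + + Hy; have : y \in x :: L by rewrite inE Hy orbT.
clear Hy; case/splitPl: L / => L1 L2 Ey HL Hx.
have [H1 H2] := follows_split HL; rewrite Ey in H2.
have Hlast : last y L2 = x by rewrite -Hx last_cat Ey.
exists (L2 ++ L1), (drop (size L1) R ++ take (size L1) R); split.
- by apply: follows_cat; rewrite ?Hlast.
- by rewrite last_cat Hlast.
- by rewrite perm_catC.
- exists (size (pmap id (drop (size L1) R))).
  by rewrite !pmap_cat rot_size_cat -pmap_cat cat_take_drop.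
Qed.

Fixpoint trace (o : obj) (d : diagram) (x : nat * nat) (n : nat) :
    seq (nat * nat) * seq (option cc) :=
  if n is n'.+1 then
    if step_inside o d x then
      let: (y, r) := step_from o d x in
      let: (L, R) := trace o d y n' in (y :: L, r :: R)
    else ([::], [::])
  else ([::], [::]).

Lemma follows_trace P S B x n Q : run [::] P = Some S ->
  follows (step (P ++ B ++ Q)) (shift (size P) x)
          (map (shift (size P)) (trace S B x n).1) (trace S B x n).2.
Proof.
move=> HP; elim: n x => [|n IH] x //; rewrite [trace S B x n.+1]/=.
case: ifP => // Hin; case E: (step_from S B x) => [y r].
case: (trace S B y n) (IH y) => L R IHy; split; last exact: IHy.
case: x Hin E => j p Hin E.
change (step_from [::] (P ++ (B ++ Q)) (size P + j, p) = (shift (size P) y, r)).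
rewrite (step_from_catr HP) ?(step_from_catl _ Hin) ?E //.
move: Hin; rewrite /step_inside /= => /andP [Hj]; rewrite nth_levels_catl //.
by case: ifP.
Qed.

Definition inner_points (o : obj) (d : diagram) : seq (nat * nat) :=
  flatten [seq [seq (t, p) | p <- iota 0 (size (nth [::] (levels o d) t))]
          | t <- iota 1 (size d)].

Lemma points_cat P S B : run [::] P = Some S ->
  points (P ++ B) = points P ++ map (shift (size P)) (inner_points S B).
Proof.
move=> HP; rewrite /points /inner_points size_cat -addSn iotaD map_cat flatten_cat.
congr (_ ++ _).
  congr flatten; apply/eq_in_map => t; rewrite mem_iota add0n ltnS => /andP [_ Ht].
  by rewrite /lev nth_levels_catl.
rewrite add0n -addn1 iotaDl -map_comp map_flatten -!map_comp.
congr flatten; apply/eq_map => t /=; rewrite /lev (nth_levels_catr _ _ HP) -map_comp.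
exact/eq_map.
Qed.

Lemma points_uniq d : uniq (points d).
Proof.
apply: (@allpairs_uniq_dep nat (fun _ => nat : eqType) _ (fun t p => (t, p))).
- exact: iota_uniq.
- by move=> t _; exact: iota_uniq.
- by move=> [t1 p1] [t2 p2] _ _ /= [-> ->].
Qed.

(** * Open arcs and closed strands *)

Definition down_wire (S : obj) : nat := index false S.
Definition up_wire (S : obj) : nat := index true S.

(* [P : I -> S] is traversed by a single strand that enters at the top along the
   downward wire of [S], visits every point of [P] and leaves along the upward
   wire; [L] lists the points after the entry point and [R] the caps and cups passed *)
Definition open_arc (P : diagram) (S : obj) (L : seq (nat * nat)) (R : seq (option cc)) :
    Prop :=
  let x := (size P, down_wire S) in
  [/\ run [::] P = Some S, perm_eq (x :: L) (points P), last x L = (size P, up_wire S)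
    & forall Q, follows (step (P ++ Q)) x L R].

(* a decidable certificate that the block [B : S -> S'] prolongs an open arc,
   reading the caps and cups [dn] on its way down and [up] on its way up *)
Definition arc_block (S : obj) (B : diagram) (S' : obj) (dn up : seq cc) : bool :=
  let n := size (inner_points S B) in
  let xd := (size B, down_wire S') in
  let xu := (0, up_wire S) in
  let tD := trace S B xd n in
  let tU := trace S B xu n in
  [&& run S B == Some S', last xd tD.1 == (0, down_wire S),
      last xu tU.1 == (size B, up_wire S'), perm_eq (belast xd tD.1 ++ tU.1) (inner_points S B),
      pmap id tD.2 == dn & pmap id tU.2 == up].

Lemma open_arc_cat P S L R B S' dn up : open_arc P S L R -> arc_block S B S' dn up ->
  exists L' R', open_arc (P ++ B) S' L' R' /\ pmap id R' = dn ++ pmap id R ++ up.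
Proof.
move=> [HP Hperm Hlast Hfol] /and5P [/eqP HB /eqP Hd /eqP Hu Hpe /andP [/eqP Hdn /eqP Hup]].
set h := size P; set x := (h, down_wire S) in Hperm Hlast Hfol.
set xd := (size B, down_wire S') in Hd Hpe Hdn.
set xu := (0, up_wire S) in Hu Hpe Hup.
set n := size (inner_points S B) in Hd Hpe Hdn Hu Hup.
set tD := trace S B xd n in Hd Hpe Hdn; set tU := trace S B xu n in Hu Hpe Hup.
have Hx' : (size (P ++ B), down_wire S') = shift h xd by rewrite size_cat.
have lastD : last (shift h xd) (map (shift h) tD.1) = x by rewrite last_map Hd shift0.
exists (map (shift h) tD.1 ++ L ++ map (shift h) tU.1), (tD.2 ++ R ++ tU.2).
split; last by rewrite !pmap_cat Hdn Hup.
split; rewrite ?Hx'.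
- by rewrite run_cat HP.
- rewrite (points_cat _ HP) -cat_cons.
  have -> : shift h xd :: map (shift h) tD.1 = rcons (map (shift h) (belast xd tD.1)) x.
    by rewrite -map_cons lastI map_rcons Hd shift0.
  rewrite cat_rcons -cat_cons perm_catCA -map_cat; apply: perm_cat => //.
  exact: perm_map.
- by rewrite !last_cat lastD Hlast -(shift0 (size P)) last_map Hu /shift size_cat.
- move=> Q; rewrite -catA; apply: follows_cat; first exact: follows_trace.
  rewrite lastD; apply: follows_cat; first exact: Hfol.
  by rewrite Hlast -(shift0 (size P)); apply: follows_trace.
Qed.

Definition cup_block (S : obj) (b : cc) : bool :=
  [&& run S [:: (0, G_cc b)] == Some [::], inner_points S [:: (0, G_cc b)] == [::] &
      trace S [:: (0, G_cc b)] (0, up_wire S) 1 == ([:: (0, down_wire S)], [:: Some b])].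

Definition closed_strand (d : diagram) (x : nat * nat) (L : seq (nat * nat))
    (R : seq (option cc)) : Prop :=
  [/\ typed d, perm_eq L (points d), L != [::], last x L = x & follows (step d) x L R].

Lemma open_arc_close P S L R b : open_arc P S L R -> cup_block S b ->
  let x := (size P, down_wire S) in
  closed_strand (P ++ [:: (0, G_cc b)]) x (rcons L x) (rcons R (Some b)).
Proof.
move=> [HP Hperm Hlast Hfol] /and3P [/eqP HB /eqP Hin /eqP Ht] x.
have := follows_trace [:: (0, G_cc b)] (0, up_wire S) 1 [::] HP.
rewrite Ht cats0 [map _ _]/= !shift0 => Hcup.
split.
- by rewrite /typed run_cat HP; apply/eqP.
- by rewrite (points_cat _ HP) Hin cats0 perm_rcons.
- by rewrite -size_eq0 size_rcons.
- exact: last_rcons.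
- by rewrite -!cats1; apply: follows_cat; [exact: Hfol | rewrite Hlast].
Qed.

Lemma orbit_turns_follows d x L R : follows (step d) x L R ->
  Defs.orbit d x (size L) = belast x L /\ turns d x (size L) = pmap id R.
Proof.
elim: L x R => [|y L IH] x [|r R] //= [Hs /IH [Ho Ht]].
by rewrite Hs /= Ho Ht; case: r {Hs}.
Qed.

Lemma closed_strand_knot d x L R : closed_strand d x L R ->
  is_knot d /\ cyc_eq (ccc d) (pmap id R).
Proof.
move=> [Hty Hperm HL Hx Hfol].
have Hpts : 0 < size (points d) by rewrite -(perm_size Hperm) lt0n size_eq0.
have Hstart : start d \in L.
  by rewrite (perm_mem Hperm) /start; case: (points d) Hpts => // p ps _; exact: mem_head.
have [L' [R' [Hfol' Hlast' Hperm' Hcyc]]] := follows_rot Hfol Hx Hstart.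
have [Horb Htur] := orbit_turns_follows Hfol'.
have Hsize : size (points d) = size L' by rewrite (perm_size Hperm') (perm_size Hperm).
have Hbelast : perm_eq (belast (start d) L') (points d).
  have : perm_eq (start d :: L') (start d :: belast (start d) L').
    by rewrite lastI Hlast' perm_rcons.
  by rewrite perm_cons perm_sym => /perm_trans; apply; apply: perm_trans Hperm.
split; last by rewrite /ccc Hsize Htur.
apply/and4P; split => //; rewrite Hsize Horb.
- by rewrite (perm_uniq Hbelast) points_uniq.
- by apply/allP => s; rewrite (perm_mem Hbelast).
Qed.

(** * The realising diagram *)

Definition frame (b : bool) : obj := [:: b; ~~ b].
Definition cap_of (b : bool) : cc := if b then cap_r else cap_l.
Definition cup_of (b : bool) : cc := if b then cup_l else cup_r.

(* the cup [y] then the cap [z] inserted on the upward wire of [frame b];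
   when their orientations disagree a crossing of sign [(t y + t z) / 2] is needed *)
Definition wiggle (b : bool) (y z : cc) : diagram :=
  let k := if b then 0 else 1 in
  match y, z with
  | cup_r, cap_r => [:: (k, G_cc cap_r); (k.+1, G_cc cup_r)]
  | cup_l, cap_l => [:: (k.+1, G_cc cap_l); (k, G_cc cup_l)]
  | cup_l, cap_r => [:: (k.+1, G_cc cap_r); (k, G_braid true true true); (k.+1, G_cc cup_l)]
  | cup_r, cap_l => [:: (k, G_cc cap_l); (k.+1, G_braid true true false); (k, G_cc cup_r)]
  | _, _ => [::]
  end.

Fixpoint twist (b : bool) (m : nat) (s : bool) : diagram :=
  if m is m'.+1 then (0, G_braid b (~~ b) s) :: twist (~~ b) m' s else [::].

Inductive cup_word : seq cc -> Prop :=
| cup_word1 y : ~~ is_cap y -> cup_word [:: y]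
| cup_word_cons y z l : ~~ is_cap y -> is_cap z -> cup_word l -> cup_word [:: y, z & l].

Fixpoint wiggles (b : bool) (l : seq cc) : diagram :=
  match l with
  | y :: z :: l' => wiggle b y z ++ wiggles b l'
  | [:: y] => [:: (0, G_cc y)]
  | [::] => [::]
  end.

Definition realization (b : bool) (m : nat) (s : bool) (l : seq cc) : diagram :=
  (0, G_cc (cap_of b)) :: twist b m s ++ wiggles (odd m (+) b) l.

Lemma cup_word_last x y l : cup_word l -> last x l = last y l.
Proof. by case. Qed.

Lemma cup_word_last_cup l : cup_word l -> ~~ is_cap (last cap_l l).
Proof. by elim=> // y z l' _ _ wl; rewrite /= (cup_word_last z cap_l wl). Qed.

Lemma wiggle_arc b y z : ~~ is_cap y -> is_cap z ->
  arc_block (frame b) (wiggle b y z) (frame b) [::] [:: y; z].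
Proof. by case: b; case: y; case: z => // _ _; vm_compute. Qed.

Lemma braid_arc b s : arc_block (frame b) [:: (0, G_braid b (~~ b) s)] (frame (~~ b)) [::] [::].
Proof. by case: b; case: s; vm_compute. Qed.

Lemma cup_of_block b : cup_block (frame b) (cup_of b).
Proof. by case: b; vm_compute. Qed.

Lemma cap_arc b :
  open_arc [:: (0, G_cc (cap_of b))] (frame b) [:: (1, up_wire (frame b))] [:: Some (cap_of b)].
Proof.
split; [by case: b | by case: b; vm_compute | by [] | move=> Q].
have Ht : trace [::] [:: (0, G_cc (cap_of b))] (1, down_wire (frame b)) 1 =
          ([:: (1, up_wire (frame b))], [:: Some (cap_of b)]) by case: b; vm_compute.
have := follows_trace [:: (0, G_cc (cap_of b))] (1, down_wire (frame b)) 1 Q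
  (erefl : run [::] [::] = Some [::]).
by rewrite Ht.
Qed.

Lemma open_arc_twist m s P b L R : open_arc P (frame b) L R ->
  exists L' R', open_arc (P ++ twist b m s) (frame (odd m (+) b)) L' R' /\ pmap id R' = pmap id R.
Proof.
elim: m P b L R => [|m IH] P b L R H; first by exists L, R; rewrite cats0.
have [L1 [R1 [H1 E1]]] := open_arc_cat H (braid_arc b s).
have [L2 [R2 [H2 E2]]] := IH _ _ _ _ H1.
exists L2, R2; split; last by rewrite E2 E1 cats0.
have -> : P ++ twist b m.+1 s = (P ++ [:: (0, G_braid b (~~ b) s)]) ++ twist (~~ b) m s.
  by rewrite -catA.
by rewrite oddS addNb -addbN.
Qed.

Lemma wiggles_closed l P b L R :
  cup_word l -> last cap_l l = cup_of b -> open_arc P (frame b) L R ->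
  exists x L' R', closed_strand (P ++ wiggles b l) x L' R' /\ pmap id R' = pmap id R ++ l.
Proof.
move=> wl; elim: wl P L R => [y _ | y z l' Hy Hz wl IH] P L R /=.
  move=> -> /open_arc_close /(_ (cup_of_block b)) H.
  by do 3 eexists; split; [exact: H | rewrite -cats1 pmap_cat].
rewrite (cup_word_last z cap_l wl) => Hlast H.
have [L1 [R1 [H1 E1]]] := open_arc_cat H (wiggle_arc b Hy Hz).
have [x [L2 [R2 [H2 E2]]]] := IH _ _ _ Hlast H1.
exists x, L2, R2; split; first by rewrite catA.
by rewrite E2 E1 /= -catA.
Qed.

Lemma run_braid b s : run (frame b) [:: (0, G_braid b (~~ b) s)] = Some (frame (~~ b)).
Proof. by case: b. Qed.

Lemma run_twist b m s : run (frame b) (twist b m s) = Some (frame (odd m (+) b)).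
Proof.
elim: m b => [|m IH] b //.
change (twist b m.+1 s) with ([:: (0, G_braid b (~~ b) s)] ++ twist (~~ b) m s).
by rewrite run_cat run_braid [obind _ _]/= IH oddS addNb addbN.
Qed.

Lemma run_wiggles b l : cup_word l -> last cap_l l = cup_of b ->
  run (frame b) (wiggles b l) = Some [::].
Proof.
move=> wl; elim: wl => [y _ /= -> | y z l' Hy Hz wl IH /=]; first by case: b.
rewrite (cup_word_last z cap_l wl) => /IH.
by case/and5P: (wiggle_arc b Hy Hz) => /eqP HW _ _ _ _; rewrite run_cat HW.
Qed.

(** * Isotopies of blocks *)

Definition block_iso (S S' : obj) (X Y : diagram) : Prop :=
  forall P Q, run [::] P = Some S -> run S' Q = Some [::] -> isotopic (P ++ X ++ Q) (P ++ Y ++ Q).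

Lemma block_iso_refl S S' X : block_iso S S' X X.
Proof. by move=> *; apply: rst_refl. Qed.

Lemma block_iso_sym S S' X Y : block_iso S S' X Y -> block_iso S S' Y X.
Proof. by move=> H P Q HP HQ; apply: rst_sym; apply: H. Qed.

Lemma block_iso_trans S S' X Y Z :
  block_iso S S' X Y -> block_iso S S' Y Z -> block_iso S S' X Z.
Proof. by move=> H1 H2 P Q HP HQ; apply: rst_trans (H1 P Q HP HQ) (H2 P Q HP HQ). Qed.

Lemma block_iso_catr S S' S'' X Y Z : block_iso S S' X Y -> run S' Z = Some S'' ->
  block_iso S S'' (X ++ Z) (Y ++ Z).
Proof.
by move=> H HZ P Q HP HQ; rewrite -!catA; apply: H; rewrite // run_cat HZ.
Qed.

Lemma block_iso_catl S0 S S' X Y Z : run S0 Z = Some S -> block_iso S S' X Y ->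
  block_iso S0 S' (Z ++ X) (Z ++ Y).
Proof.
move=> HZ H P Q HP HQ; rewrite -!catA !(catA P Z).
by apply: H; rewrite // run_cat HP.
Qed.

Lemma block_iso_isotopic X Y : block_iso [::] [::] X Y -> isotopic X Y.
Proof. by move/(_ [::] [::] erefl erefl); rewrite !cats0. Qed.

Lemma typed_cat3 P X Q S S' : run [::] P = Some S -> run S X = Some S' -> run S' Q = Some [::] ->
  typed (P ++ X ++ Q).
Proof. by move=> HP HX HQ; rewrite /typed run_cat HP /= run_cat HX /= HQ. Qed.

Lemma block_iso_move S S' a1 a2 lhs rhs : local_move lhs rhs ->
  run S (a1 ++ lhs ++ a2) = Some S' -> run S (a1 ++ rhs ++ a2) = Some S' ->
  block_iso S S' (a1 ++ lhs ++ a2) (a1 ++ rhs ++ a2).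
Proof.
move=> Hm HX HY P Q HP HQ; apply: rst_step.
split; [exact: typed_cat3 HP HX HQ | split; first exact: typed_cat3 HP HY HQ].
by exists (P ++ a1), (a2 ++ Q), lhs, rhs; rewrite -!catA.
Qed.

Lemma lm_slide_cap_r k : local_move
  [:: (k.+1, G_cc cap_r); (k, G_braid true true true); (k.+1, G_braid true false true)]
  [:: (k, G_cc cap_r)].
Proof. by have := lm_nat_right k (G_cc cap_r) true true; rewrite /pass_right /= addn0 addn1. Qed.

Lemma lm_slide_cap_l k : local_move
  [:: (k, G_cc cap_l); (k.+1, G_braid true true false); (k, G_braid false true false)]
  [:: (k.+1, G_cc cap_l)].
Proof. by have := lm_nat_left k (G_cc cap_l) false true; rewrite /pass_left /= addn0 addn1. Qed.

(* a crossed wiggle is untwisted by an R2 move, a slide of the cap along the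
   crossing, an R1 move and a zigzag *)
Lemma wiggle_iso b y z : ~~ is_cap y -> is_cap z ->
  block_iso (frame b) (frame b) (wiggle b y z) [::].
Proof.
rewrite /wiggle; set k := if b then 0 else 1.
case: y; case: z => // _ _.
- by apply: (@block_iso_move _ _ [::] [::] _ _ (lm_zig2 k)); case: b @k.
- apply: block_iso_trans.
    apply: block_iso_sym.
    by apply: (@block_iso_move _ _ [:: (k.+1, G_cc cap_r); (k, G_braid true true true)]
                 [:: (k.+1, G_cc cup_l)] _ _ (lm_R2 k.+1 true false true)); case: b @k.
  apply: block_iso_trans.
    by apply: (@block_iso_move _ _ [::] [:: (k.+1, G_braid false true false); (k.+1, G_cc cup_l)]
                 _ _ (lm_slide_cap_r k)); case: b @k.
  apply: block_iso_trans.
    by apply: (@block_iso_move _ _ [:: (k, G_cc cap_r)] [::] _ _ (lm_R1cup_l k.+1 false));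
      case: b @k.
  by apply: (@block_iso_move _ _ [::] [::] _ _ (lm_zig3 k)); case: b @k.
- apply: block_iso_trans.
    apply: block_iso_sym.
    by apply: (@block_iso_move _ _ [:: (k, G_cc cap_l); (k.+1, G_braid true true false)]
                 [:: (k, G_cc cup_r)] _ _ (lm_R2 k false true false)); case: b @k.
  apply: block_iso_trans.
    by apply: (@block_iso_move _ _ [::] [:: (k, G_braid true false true); (k, G_cc cup_r)]
                 _ _ (lm_slide_cap_l k)); case: b @k.
  apply: block_iso_trans.
    by apply: (@block_iso_move _ _ [:: (k.+1, G_cc cap_l)] [::] _ _ (lm_R1cup_r k true));
      case: b @k.
  by apply: (@block_iso_move _ _ [::] [::] _ _ (lm_zig2 k)); case: b @k.
- by apply: (@block_iso_move _ _ [::] [::] _ _ (lm_zig3 k)); case: b @k.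
Qed.

Lemma cap_braid_iso b s : block_iso [::] (frame (~~ b))
  [:: (0, G_cc (cap_of b)); (0, G_braid b (~~ b) s)] [:: (0, G_cc (cap_of (~~ b)))].
Proof.
case: b.
- exact: (@block_iso_move _ _ [::] [::] _ _ (lm_R1cap_r 0 s)).
- exact: (@block_iso_move _ _ [::] [::] _ _ (lm_R1cap_l 0 s)).
Qed.

Lemma twist_iso b m s : block_iso [::] (frame (odd m (+) b))
  ((0, G_cc (cap_of b)) :: twist b m s) [:: (0, G_cc (cap_of (odd m (+) b)))].
Proof.
elim: m b => [|m IH] b; first exact: block_iso_refl.
rewrite oddS addNb -addbN; apply: block_iso_trans (IH (~~ b)).
exact: (block_iso_catr (@cap_braid_iso b s) (run_twist (~~ b) m s)).
Qed.

Lemma wiggles_iso b l : cup_word l -> last cap_l l = cup_of b ->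
  block_iso (frame b) [::] (wiggles b l) [:: (0, G_cc (cup_of b))].
Proof.
move=> wl; elim: wl => [y _ /= -> | y z l' Hy Hz wl IH /=]; first exact: block_iso_refl.
rewrite (cup_word_last z cap_l wl) => Hlast; apply: block_iso_trans (IH Hlast).
exact: (block_iso_catr (@wiggle_iso b y z Hy Hz) (run_wiggles wl Hlast)).
Qed.

Lemma round_unknot_iso b :
  isotopic [:: (0, G_cc (cap_of b)); (0, G_cc (cup_of b))] round_unknot.
Proof.
case: b; first exact: rst_refl.
apply: block_iso_isotopic; apply: block_iso_trans.
  apply: block_iso_sym.
  exact: (@block_iso_move _ _ [:: (0, G_cc cap_l)] [::] _ _ (lm_R1cup_l 0 true)).
exact: (@block_iso_move _ _ [::] [:: (0, G_cc cup_l)] _ _ (lm_R1cap_l 0 true)).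
Qed.

Lemma realization_unknot b m s l : cup_word l -> last cap_l l = cup_of (odd m (+) b) ->
  unknot_diagram (realization b m s l) /\ cyc_eq (ccc (realization b m s l)) (cap_of b :: l).
Proof.
move=> wl Hlast.
have [L1 [R1 [H1 E1]]] := open_arc_twist m s (cap_arc b).
have [x [L [R [HC E]]]] := wiggles_closed wl Hlast H1.
have [Hknot Hcyc] := closed_strand_knot HC.
split; last by rewrite E E1 in Hcyc.
split=> //; apply: rst_trans (round_unknot_iso (odd m (+) b)).
have [Hrun _ _ _] := H1.
apply: block_iso_isotopic; apply: block_iso_trans.
  exact: (block_iso_catl Hrun (wiggles_iso wl Hlast)).
by apply: (block_iso_catr (@twist_iso b m s)); case: (odd m (+) b).
Qed.

Import GRing.Theory.
Local Open Scope ring_scope.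

(** * Writhe and turning numbers *)

Definition turning_sum (s : seq cc) : int := \sum_(x <- s) turning x.

Lemma turning_sum_cons x s : turning_sum (x :: s) = turning x + turning_sum s.
Proof. by rewrite /turning_sum big_cons. Qed.

Lemma turning_sum_rot r s : turning_sum (rot r s) = turning_sum s.
Proof. by apply: perm_big; rewrite perm_rot. Qed.

(* each element satisfies [T (x, w) = t x + 2 w mod 4], as [t x = +-1] *)
Lemma Tc_mod4 c : (4 %| turning_sum (Uc c) + 2 * Wc c - Tc c)%Z.
Proof.
elim: c => [|[x w] c IH]; first by rewrite /turning_sum /Wc /Tc !big_nil.
rewrite /turning_sum /Wc /Tc /Uc /= !big_cons /=.
rewrite -/(turning_sum (Uc c)) -/(Wc c) -/(Tc c) in IH *.
rewrite /tT /= -signr_odd.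
by move: IH; case Ho: (odd `|w|%N); rewrite ?expr1 ?expr0; case: x => /=; lia.
Qed.

Lemma writhe_cat A B : writhe (A ++ B) = writhe A + writhe B.
Proof. by rewrite /writhe big_cat. Qed.

Lemma writhe_wiggle b y z : ~~ is_cap y -> is_cap z ->
  2 * writhe (wiggle b y z) = turning y + turning z.
Proof. by case: b; case: y; case: z => //= _ _; rewrite /writhe !big_cons big_nil. Qed.

Lemma writhe_wiggles b l : cup_word l ->
  2 * writhe (wiggles b l) = turning_sum l - turning (last cap_l l).
Proof.
elim=> [y _ | y z l' Hy Hz wl IH] /=.
  by rewrite /writhe /turning_sum !big_cons !big_nil /=; lia.
rewrite writhe_cat mulrDr writhe_wiggle // IH !turning_sum_cons (cup_word_last z cap_l wl).
lia.
Qed.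

Lemma writhe_twist b m s : writhe (twist b m s) = if s then - m%:Z else m%:Z.
Proof.
elim: m b => [|m IH] b; first by rewrite /writhe big_nil; case: s.
rewrite /= -cat1s writhe_cat IH /writhe big_seq1.
by clear IH; case: b; case: s => /=; lia.
Qed.

Lemma writhe_realization b m s l : writhe (realization b m s l) =
  (if s then - m%:Z else m%:Z) + writhe (wiggles (odd m (+) b) l).
Proof. by rewrite /realization -cat1s !writhe_cat writhe_twist {1}/writhe big_seq1 add0r. Qed.

(* with [2 G = t l - t (last l)] for the writhe [G] of the wiggles, the
   hypothesis reads [t a + t (last l) + 2 (w + G) = 2 mod 4] *)
Lemma twist_parity a l b w : is_cap a -> cup_word l ->
  (4 %| turning a + turning_sum l + 2 * w - 2)%Z ->
  odd `|w - writhe (wiggles b l)|%N (+) (a == cap_r) = (last cap_l l == cup_l).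
Proof.
move=> Ha wl; have := writhe_wiggles b wl; have := cup_word_last_cup wl.
case: (last cap_l l) => //= _; case: a Ha => //= _ HG Hmod;
  by case Ho: (odd _) => //; exfalso; lia.
Qed.

Lemma realization_exists a l w : is_cap a -> cup_word l ->
  (4 %| turning a + turning_sum l + 2 * w - 2)%Z ->
  exists g, [/\ unknot_diagram g, writhe g = w & cyc_eq (ccc g) (a :: l)].
Proof.
move=> Ha wl Hmod; have Ea : cap_of (a == cap_r) = a by case: a Ha Hmod => // _ _.
set bt := last cap_l l == cup_l.
set e := w - writhe (wiggles bt l).
have Hpar : odd `|e|%N (+) (a == cap_r) = bt := twist_parity bt Ha wl Hmod.
have Hlast : last cap_l l = cup_of (odd `|e|%N (+) (a == cap_r)).
  by rewrite Hpar /bt; case: (last cap_l l) (cup_word_last_cup wl).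
have [Hunk Hcyc] := realization_unknot (e < 0) wl Hlast.
exists (realization (a == cap_r) `|e|%N (e < 0) l).
split=> //; last by rewrite Ea in Hcyc.
by rewrite writhe_realization Hpar /e; case: ifP => He; lia.
Qed.

(** * Cap-cup cycles *)

Definition alternates : rel cc := fun x y => is_cap x != is_cap y.

Lemma alternating_cycle s : alternating s -> cycle alternates s.
Proof.
case: s => [|x s'] // /allP Halt; apply/(pathP x) => i; rewrite size_rcons ltnS => Hi.
have := Halt i; rewrite mem_iota add0n /= ltnS Hi => /(_ isT).
have -> : nth x (x :: rcons s' x) i = nth cap_l (x :: s') i.
  by case: i Hi => [|j] //= Hj; rewrite nth_rcons Hj (set_nth_default cap_l).
rewrite /alternates nth_rcons; case: ltnP => Hi2.
  by rewrite modn_small ?ltnS // (set_nth_default cap_l).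
have -> : i = size s' by apply/eqP; rewrite eqn_leq Hi Hi2.
by rewrite eqxx modnn.
Qed.

Lemma path_cup_word x l a : is_cap x -> is_cap a -> path alternates x (rcons l a) -> cup_word l.
Proof.
have [n] := ubnP (size l); elim: n x l => // n IH x [|y [|z l]] Hn Hx Ha /=.
- by rewrite /alternates Hx Ha.
- by rewrite /alternates Hx => /andP [Hy _]; apply: cup_word1.
rewrite /alternates Hx => /and3P [Hy Hyz Hp].
have Hz : is_cap z by move: Hy Hyz; case: (is_cap y); case: (is_cap z).
apply: cup_word_cons => //; apply: (IH z l _ Hz Ha Hp).
by move: Hn => /=; lia.
Qed.

Lemma alternating_cap_rotation s : alternating s -> s != [::] ->
  exists r a l, [/\ rot r s = a :: l, is_cap a & cup_word l].
Proof.
move=> Halt Hs.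
have [a a_in Ha] : exists2 a, a \in s & is_cap a.
  case: s Hs Halt => // x s' _ /allP /(_ 0); rewrite mem_iota => /(_ isT) /=.
  case Hx: (is_cap x) => Hxy; first by exists x; rewrite ?mem_head.
  exists (nth cap_l (x :: s') (1 %% (size s').+1)); first by rewrite mem_nth // ltn_mod.
  by move: Hxy; case: (is_cap _).
have [r l Hrot] := rot_to a_in.
exists r, a, l; split=> //.
by have := alternating_cycle Halt; rewrite -(rot_cycle r) Hrot; exact: path_cup_word.
Qed.

Lemma cyc_eq_trans (T : Type) (s t u : seq T) : cyc_eq s t -> cyc_eq t u -> cyc_eq s u.
Proof. by move=> [n1 <-] [n2 <-]; exists (rot_add s n1 n2); rewrite rot_rot_add. Qed.

Lemma cyc_eq_rot (T : Type) r (s : seq T) : cyc_eq (rot r s) s.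
Proof. by exists (size (rot r s) - r)%N; exact: rotK. Qed.

Theorem mainTheorem4 (c : seq tcc) :
  is_tcc_cycle c -> (Tc c = 2 \/ Tc c = -2) ->
  exists g : diagram, unknot_diagram g /\ writhe g = Wc c /\ cyc_eq (ccc g) (Uc c).
Proof.
move=> Halt HT.
have HU : Uc c != [::] by case: c {Halt} HT => // HT; rewrite /Tc big_nil in HT; lia.
have [r [a [l [Hrot Ha wl]]]] := alternating_cap_rotation Halt HU.
have Hmod : (4 %| turning a + turning_sum l + 2 * Wc c - 2)%Z.
  have := Tc_mod4 c; rewrite -(turning_sum_rot r) Hrot turning_sum_cons.
  by case: HT => ->; lia.
have [g [Hg Hw Hcyc]] := realization_exists Ha wl Hmod.
exists g; split=> //; split=> //.
by apply: cyc_eq_trans Hcyc _; rewrite -Hrot; exact: cyc_eq_rot.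
Qed.
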